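(* Let $n=2m+1$ be odd, and let $\mathbf{V}=\{V_{rj}\}$, $V_j$ and $V$ be as described in the context. Let $M$ be uniform on $\{m,m+1\}$, independent of $\mathbf{V}$. For $i\in\{1,\dots,n\}$, given $\mathbf{V}$ and $M$, let $F^i\in\{0,1\}$ satisfy $P(F^i=1\mid\mathbf{V},M)=\frac{1}{m+1}\mathbf{1}(\mathbf{V}^{M,i}\text{ is feasible})$, and let $J^i$ be uniform on $\{j:V_{Mj}\ne V_{Mi}\}$. Define $$\mathbf{V}^i=\begin{cases}\mathbf{V}&V_i=1\\ \mathbf{V}^{M,i}&V_i=0,\ F^i=1\\ \mathbf{V}^{M,i,J^i}&V_i=0,\ F^i=0.\end{cases}$$ Then $\mathcal{L}(\mathbf{V}^i)=\mathcal{L}(\mathbf{V}\mid V_i=1)$. Further, let $V^i=\sum_{j=1}^nV^i_j$ with $V^i_j=(\sum_{r=1}^nV^i_{rj})\bmod 2$, and let $I$ be uniform on $\{1,\dots,n\}$, independent of all other variables. Then $V^s=V^I$ has the $V$-size bias distribution and, writing $F=F^I$, $J=J^I$, $$V^s-V=\mathbf{1}_{\{V_I=0,F=1\}}+2\,\mathbf{1}_{\{V_I=0,\,V_J=0,\,F=0\}}\quad\text{and}\quad V\le V^s\le V+2.$$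
   Context: Standard lightbulb process: $n$ bulbs, all initially off, $n$ stages; at stage $r$ a uniformly random subset of exactly $r$ bulbs is toggled, independently across stages; switch variables $X_{rj}\in\{0,1\}$ ($1$ iff bulb $j$ toggled at stage $r$). Construction of $\mathbf{V}$ for $n=2m+1$: given $\mathbf{X}$, let $B_m$ be uniform on $\{j:X_{mj}=0\}$ and $B_{m+1}$ uniform on $\{j:X_{m+1,j}=1\}$; let $C_m,C_{m+1}$ be independent symmetric Bernoulli variables independent of $\mathbf{X},B_m,B_{m+1}$; set $V_{rj}=X_{rj}$ except $V_{m,B_m}=C_m$ and $V_{m+1,B_{m+1}}=C_{m+1}$; $V_j=(\sum_rV_{rj})\bmod2$, $V=\sum_jV_j$. A $\{0,1\}$-array $\mathbf{e}=\{e_{rj}\}_{r,j=1}^n$ is feasible if $\sum_je_{rj}=r$ for $r\notin\{m,m+1\}$ and $\sum_je_{rj}\in\{m,m+1\}$ for $r\in\{m,m+1\}$. For $r\in\{m,m+1\}$ and $i,j$: $\mathbf{e}^{r,i}$ equals $\mathbf{e}$ except that entry $(r,i)$ is replaced by $1-e_{ri}$; $\mathbf{e}^{r,i,j}$ equals $\mathbf{e}$ with the entries in positions $(r,i)$ and $(r,j)$ interchanged. $\mathbf{V}^{M,i}$, $\mathbf{V}^{M,i,j}$ are defined likewise from $\mathbf{V}$. $V^s$ has the $V$-size bias distribution if $E[Vg(V)]=E[V]E[g(V^s)]$ for all bounded continuous $g$. *)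

From mathcomp Require Import all_boot all_order all_algebra.
Set Implicit Arguments. Unset Strict Implicit. Unset Printing Implicit Defensive.
Import Order.TTheory GRing.Theory Num.Theory.
Local Open Scope ring_scope.

Definition nbulbs (m : nat) : nat := (m.*2).+1.

(* A {0,1}-array e = {e_{rj}}: the entry for stage r+1 and bulb j+1 is
   e (r, j), with r j : 'I_n (0-based indices). *)
Definition arr (m : nat) := {ffun 'I_(nbulbs m) * 'I_(nbulbs m) -> bool}.

Definition rowsum (m : nat) (e : arr m) (r : 'I_(nbulbs m)) : nat :=
  (\sum_(j < nbulbs m) e (r, j))%N.

(* 0-based row index of stage m (= m-1) and of stage m+1 (= m). *)
Definition row_m (m : nat) : 'I_(nbulbs m) := inord m.-1.
Definition row_m1 (m : nat) : 'I_(nbulbs m) := inord m.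

(* The stage M in {m, m+1} is encoded by a boolean b : M = m + b;
   its 0-based row index. *)
Definition rowM (m : nat) (b : bool) : 'I_(nbulbs m) :=
  if b then row_m1 m else row_m m.

Definition feasible (m : nat) (e : arr m) : bool :=
  [forall r : 'I_(nbulbs m),
     if (r.+1 == m)%N || (r.+1 == m.+1)%N
     then (rowsum e r == m)%N || (rowsum e r == m.+1)%N
     else (rowsum e r == r.+1)%N].

Definition flip (m : nat) (e : arr m) (r i : 'I_(nbulbs m)) : arr m :=
  [ffun p => if p == (r, i) then ~~ e (r, i) else e p].

Definition swap (m : nat) (e : arr m) (r i j : 'I_(nbulbs m)) : arr m :=
  [ffun p => if p == (r, i) then e (r, j)
             else if p == (r, j) then e (r, i) else e p].

Definition colpar (m : nat) (e : arr m) (j : 'I_(nbulbs m)) : bool :=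
  odd (\sum_(r < nbulbs m) e (r, j)).

Definition Vtot (m : nat) (e : arr m) : nat :=
  (\sum_(j < nbulbs m) colpar e j)%N.

Section Laws.
Variable R : realFieldType.
Variable m : nat.
Local Notation n := (nbulbs m).

(* Law of the switch array X: independent stages, stage r+1 toggles a uniform
   subset of exactly r+1 bulbs. *)
Definition pX (x : arr m) : R :=
  \prod_(r < n) ((rowsum x r == r.+1)%N%:R / ('C(n, r.+1))%:R).

(* V built from X, B_m, C_m, B_{m+1}, C_{m+1} *)
Definition mkV (x : arr m) (bm : 'I_n) (cm : bool) (bm1 : 'I_n) (cm1 : bool)
  : arr m :=
  [ffun p => if p == (row_m m, bm) then cm
             else if p == (row_m1 m, bm1) then cm1 else x p].

Definition pBm (x : arr m) (j : 'I_n) : R :=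
  (~~ x (row_m m, j))%:R / #|[set k | ~~ x (row_m m, k)]|%:R.

Definition pBm1 (x : arr m) (j : 'I_n) : R :=
  (x (row_m1 m, j))%:R / #|[set k | x (row_m1 m, k)]|%:R.

(* Law of V (marginal of the construction; C_m, C_{m+1} fair coins). *)
Definition pV (v : arr m) : R :=
  \sum_(x : arr m) \sum_(bm : 'I_n) \sum_(bm1 : 'I_n)
   \sum_(cm : bool) \sum_(cm1 : bool)
     pX x * pBm x bm * pBm1 x bm1 * (2^-1 * 2^-1)
       * (v == mkV x bm cm bm1 cm1)%:R.

Definition pF (i : 'I_n) (v : arr m) (b : bool) (f : bool) : R :=
  let q := (feasible (flip v (rowM m b) i))%:R / (m.+1)%:R in
  if f then q else 1 - q.

Definition pJ (i : 'I_n) (v : arr m) (b : bool) (j : 'I_n) : R :=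
  (v (rowM m b, j) != v (rowM m b, i))%:R
    / #|[set k | v (rowM m b, k) != v (rowM m b, i)]|%:R.

(* Joint law of (V, M, F^i, J^i): M uniform on {m, m+1} independent of V;
   given (V, M), F^i and J^i have the laws above (conditionally
   independent). *)
Definition pjoint (i : 'I_n) (v : arr m) (b : bool) (f : bool) (j : 'I_n) : R :=
  pV v * 2^-1 * pF i v b f * pJ i v b j.

End Laws.

Definition Vi (m : nat) (i : 'I_(nbulbs m)) (v : arr m) (b : bool) (f : bool)
  (j : 'I_(nbulbs m)) : arr m :=
  if colpar v i then v
  else if f then flip v (rowM m b) i
  else swap v (rowM m b) i j.

From mathcomp Require Import all_boot all_order all_algebra all_fingroup.
From mathcomp Require Import zify ring.
Import Order.TTheory GRing.Theory Num.Theory.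
Local Open Scope ring_scope.
Set Implicit Arguments. Unset Strict Implicit. Unset Printing Implicit Defensive.

(* The law of V is uniform on the feasible arrays: X is recovered from V by
   undoing the two coin flips, and the choice probabilities of B_m and B_{m+1}
   exactly compensate the number of ways of doing so.  When V_i = 0, V^i
   toggles entry (M, i) or swaps it with an entry of opposite value in row M;
   both moves are involutions, and their rates make every feasible w with
   w_i = 1 receive total mass one, for each value of M, from the arrays with
   v_i = 0.  So the kernel V -> V^i, the identity when V_i = 1, maps the
   uniform law on feasible arrays to twice its restriction to {V_i = 1}.  This
   gives P(V_i = 1) = 1/2 and L(V^i) = L(V | V_i = 1), and the size bias
   follows from E[V g(V)] = sum_i P(V_i = 1) E[g(V) | V_i = 1].  The increment
   V^i - V is read off from the effect of a toggle or a swap on the column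
   parities. *)

Lemma sum_nat_card (T : finType) (P : pred T) :
  (\sum_(x : T) P x)%N = #|[set x | P x]|.
Proof.
rewrite -sum1_card [RHS]big_mkcond /=; apply: eq_bigr => x _.
by rewrite inE; case: (P x).
Qed.

Lemma sumr_natr_card (R : pzSemiRingType) (T : finType) (P : pred T) :
  \sum_(x : T) (P x)%:R = #|[set x | P x]|%:R :> R.
Proof. by rewrite -natr_sum sum_nat_card. Qed.

Lemma sumr_mul_eq (R : pzSemiRingType) (T : finType) (F : T -> R) (y : T) :
  \sum_(x : T) F x * (x == y)%:R = F y.
Proof.
rewrite (bigD1 y) //= eqxx mulr1 big1 ?addr0 // => x /negPf ->.
by rewrite mulr0.
Qed.

Lemma sumr_bool_single (R : pzSemiRingType) (F : bool -> R) (c0 : bool) :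
  (forall c, c != c0 -> F c = 0) -> \sum_(c : bool) F c = F c0.
Proof.
move=> F0; rewrite big_bool /=; case: c0 F0 => F0.
  by rewrite (F0 false) ?addr0.
by rewrite (F0 true) ?add0r.
Qed.

Lemma sumr_split_bool (R : pzSemiRingType) (I : finType) (b : I -> bool)
    (F : bool -> R) :
  \sum_(k : I) F (b k) =
  #|[set k | b k]|%:R * F true + #|[set k | ~~ b k]|%:R * F false.
Proof.
rewrite -!sumr_natr_card !big_distrl -big_split /=; apply: eq_bigr => k _.
by case: (b k); rewrite /= ?(mul0r, mul1r, addr0, add0r).
Qed.

Lemma sumr_eq_natr (R : pzSemiRingType) (T : finType) (y : T) :
  \sum_(x : T) (y == x)%:R = 1 :> R.
Proof.
by rewrite -[RHS](sumr_mul_eq (fun=> 1) y); apply: eq_bigr => x _; rewrite mul1r eq_sym.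
Qed.

Lemma natr_andb (R : pzSemiRingType) (a b : bool) :
  (a && b)%:R = a%:R * b%:R :> R.
Proof. by rewrite -mulnb natrM. Qed.

Section Arrays.
Variable m : nat.
Local Notation n := (nbulbs m).

Definition middle_stage (r : 'I_n) : bool := ((r.+1 == m) || (r.+1 == m.+1))%N.

Definition stage_ok (r : 'I_n) (s : nat) : bool :=
  if middle_stage r then ((s == m) || (s == m.+1))%N else (s == r.+1)%N.

Lemma feasibleE (e : arr m) : feasible e = [forall r, stage_ok r (rowsum e r)].
Proof. by []. Qed.

Lemma feasible_middle_rowsum (e : arr m) r : middle_stage r -> feasible e ->
  ((rowsum e r == m) || (rowsum e r == m.+1))%N.
Proof. by move=> mr; rewrite feasibleE => /forallP /(_ r); rewrite /stage_ok mr. Qed.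

Lemma feasible_eq_row (w e : arr m) r : middle_stage r -> feasible w ->
    (forall r', r' != r -> rowsum e r' = rowsum w r') ->
  feasible e = ((rowsum e r == m) || (rowsum e r == m.+1))%N.
Proof.
move=> mr; rewrite !feasibleE => /forallP fw he; apply/forallP/idP => [/(_ r)|er r'].
  by rewrite /stage_ok mr.
case: (eqVneq r' r) => [->|r'r]; first by rewrite /stage_ok mr.
by rewrite he //; apply: fw.
Qed.

Lemma flipE (e : arr m) r i p :
  flip e r i p = if p == (r, i) then ~~ e (r, i) else e p.
Proof. by rewrite ffunE. Qed.

Lemma swapE (e : arr m) r i j p : swap e r i j p =
  if p == (r, i) then e (r, j) else if p == (r, j) then e (r, i) else e p.
Proof. by rewrite ffunE. Qed.

Lemma flipK (e : arr m) r i : flip (flip e r i) r i = e.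
Proof. by apply/ffunP => p; rewrite !flipE eqxx negbK; case: eqP => // ->. Qed.

Lemma flip_offrow (e : arr m) r i r' k :
  r' != r -> flip e r i (r', k) = e (r', k).
Proof. by move=> r'r; rewrite flipE !xpair_eqE (negPf r'r). Qed.

Lemma swap_row (e : arr m) r i j k : swap e r i j (r, k) = e (r, tperm i j k).
Proof.
rewrite swapE !xpair_eqE eqxx /=.
case: tpermP => [->|->|/eqP ki /eqP kj]; rewrite ?eqxx //.
  by case: eqP => // ->.
by rewrite (negPf ki) (negPf kj).
Qed.

Lemma swap_offrow (e : arr m) r i j r' k :
  r' != r -> swap e r i j (r', k) = e (r', k).
Proof. by move=> r'r; rewrite swapE !xpair_eqE (negPf r'r). Qed.

Lemma swapK (e : arr m) r i j : swap (swap e r i j) r i j = e.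
Proof.
apply/ffunP => -[r' k]; case: (eqVneq r' r) => [->|r'r].
  by rewrite !swap_row tpermK.
by rewrite !swap_offrow.
Qed.

Lemma flip_eq (v w : arr m) r i : (flip v r i == w) = (v == flip w r i).
Proof. by apply/eqP/eqP => [<-|->]; rewrite flipK. Qed.

Lemma swap_eq (v w : arr m) r i j : (swap v r i j == w) = (v == swap w r i j).
Proof. by apply/eqP/eqP => [<-|->]; rewrite swapK. Qed.

Lemma rowsum_swap (e : arr m) r i j r' : rowsum (swap e r i j) r' = rowsum e r'.
Proof.
rewrite /rowsum; case: (eqVneq r' r) => [->|r'r].
  under eq_bigr do rewrite swap_row.
  by rewrite [RHS](reindex_inj (@perm_inj _ (tperm i j))).
by under eq_bigr do rewrite swap_offrow //.
Qed.

Lemma feasible_swap (e : arr m) r i j : feasible (swap e r i j) = feasible e.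
Proof. by rewrite !feasibleE; under eq_forallb do rewrite rowsum_swap. Qed.

Lemma rowsum_flip_offrow (e : arr m) r i r' :
  r' != r -> rowsum (flip e r i) r' = rowsum e r'.
Proof. by move=> r'r; rewrite /rowsum; under eq_bigr do rewrite flip_offrow //. Qed.

Lemma rowsum_flip (e : arr m) r i :
  (rowsum (flip e r i) r + e (r, i) = rowsum e r + ~~ e (r, i))%N.
Proof.
rewrite /rowsum (bigD1 i) //= [in RHS](bigD1 i) //= flipE eqxx.
under eq_bigr => k ki do rewrite flipE xpair_eqE eqxx (negPf ki).
by case: (e (r, i)) => /=; lia.
Qed.

Lemma feasible_flip (w e : arr m) r i : middle_stage r -> feasible w ->
    (forall r', rowsum e r' = rowsum w r') ->
  feasible (flip e r i) = if e (r, i) then rowsum w r == m.+1 else rowsum w r == m.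
Proof.
move=> mr fw he.
rewrite (feasible_eq_row mr fw) => [|r' r'r]; last by rewrite rowsum_flip_offrow.
have := rowsum_flip e r i; rewrite he.
have := feasible_middle_rowsum mr fw.
case: (e (r, i)) => /=; case/orP => /eqP ->; rewrite ?addn0 ?addn1 => h;
  apply/idP/idP; move/eqP: h; try lia; try (move=> <-; rewrite ?eqxx ?orbT //).
Qed.

Lemma colpar_flip (e : arr m) r i k :
  colpar (flip e r i) k = if k == i then ~~ colpar e k else colpar e k.
Proof.
rewrite /colpar (bigD1 r) //= [in RHS](bigD1 r) //= flipE xpair_eqE eqxx /=.
under eq_bigr => r' r'r do rewrite flipE xpair_eqE (negPf r'r) /=.
case: eqP => [->|_] //.
by rewrite !oddD; case: (e (r, i)) => /=; rewrite ?negbK.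
Qed.

Lemma colpar_swap (e : arr m) r i j k : i != j ->
  colpar (swap e r i j) k =
    if (k == i) || (k == j) then colpar e k (+) (e (r, i) != e (r, j))
    else colpar e k.
Proof.
move=> ij; rewrite /colpar (bigD1 r) //= [in RHS](bigD1 r) //= swap_row.
under eq_bigr => r' r'r do rewrite swap_offrow //.
case: tpermP => [->|->|/eqP ki /eqP kj]; rewrite ?eqxx ?orbT /=;
  last by rewrite (negPf ki) (negPf kj).
all: by rewrite !oddD; case: (e (r, i)); case: (e (r, j)) => /=;
  rewrite ?addbT ?addbF ?negbK.
Qed.

Lemma Vtot_flip (e : arr m) r i :
  ~~ colpar e i -> Vtot (flip e r i) = (Vtot e).+1.
Proof.
move=> /negPf ci; rewrite /Vtot (bigD1 i) //= [in RHS](bigD1 i) //=.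
rewrite colpar_flip eqxx ci.
by under eq_bigr => k ki do rewrite colpar_flip (negPf ki).
Qed.

Lemma Vtot_swap (e : arr m) r i j : e (r, i) != e (r, j) -> ~~ colpar e i ->
  Vtot (swap e r i j) = (Vtot e + 2 * ~~ colpar e j)%N.
Proof.
move=> eij /negPf ci.
have ij : i != j by apply: contraNneq eij => ->.
rewrite /Vtot (bigD1 i) //= [in RHS](bigD1 i) //=.
rewrite (bigD1 j) //= 1?eq_sym // [in RHS](bigD1 j) //= 1?eq_sym //.
rewrite !colpar_swap // !eqxx ?orbT eij ci /=.
under eq_bigr => k /andP [ki kj] do rewrite colpar_swap // (negPf ki) (negPf kj).
by case: (colpar e j) => /=; lia.
Qed.

Lemma card_row_true (e : arr m) r : #|[set k | e (r, k)]| = rowsum e r.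
Proof. by rewrite /rowsum sum_nat_card. Qed.

Lemma card_row_false (e : arr m) r : #|[set k | ~~ e (r, k)]| = (n - rowsum e r)%N.
Proof.
have := cardC [set k | e (r, k)]; rewrite card_ord card_row_true.
have -> : #|[predC [set k | e (r, k)]]| = #|[set k | ~~ e (r, k)]|.
  by apply: eq_card => k; rewrite !inE.
lia.
Qed.

Lemma card_row_neq (e : arr m) r c :
  #|[set k | e (r, k) != c]| = if c then (n - rowsum e r)%N else rowsum e r.
Proof.
rewrite -card_row_false -card_row_true.
by case: c; apply: eq_card => k; rewrite !inE; case: (e _).
Qed.

Lemma rowsum_le (e : arr m) r : (rowsum e r <= n)%N.
Proof. by rewrite -card_row_true; apply: leq_trans (max_card _) _; rewrite card_ord. Qed.

End Arrays.

Section MiddleStages.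
Variable m : nat.
Hypothesis m_gt0 : (0 < m)%N.
Local Notation n := (nbulbs m).

Lemma val_row_m : nat_of_ord (row_m m) = m.-1.
Proof. by rewrite /row_m inordK // /nbulbs; lia. Qed.

Lemma val_row_m1 : nat_of_ord (row_m1 m) = m.
Proof. by rewrite /row_m1 inordK // /nbulbs; lia. Qed.

Lemma row_m_neq_m1 : row_m m != row_m1 m.
Proof. by rewrite -(inj_eq val_inj) /= val_row_m val_row_m1; apply/eqP; lia. Qed.

Lemma middle_stageE (r : 'I_n) :
  middle_stage r = (r == row_m m) || (r == row_m1 m).
Proof.
rewrite /middle_stage -!(inj_eq val_inj) /= val_row_m val_row_m1.
by congr orb; apply/eqP/eqP; lia.
Qed.

Lemma middle_rowM b : middle_stage (rowM m b).
Proof. by rewrite middle_stageE /rowM; case: b; rewrite eqxx ?orbT. Qed.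

End MiddleStages.

Section UniformLaw.
Variables (R : realFieldType) (m : nat).
Hypothesis m_gt0 : (0 < m)%N.
Local Notation n := (nbulbs m).
Local Notation rm := (row_m m).
Local Notation rm1 := (row_m1 m).

Lemma mkVE (x : arr m) bm cm bm1 cm1 p : mkV x bm cm bm1 cm1 p =
  if p == (rm, bm) then cm else if p == (rm1, bm1) then cm1 else x p.
Proof. by rewrite ffunE. Qed.

Lemma mkV_row_m (x : arr m) bm cm bm1 cm1 : mkV x bm cm bm1 cm1 (rm, bm) = cm.
Proof. by rewrite mkVE eqxx. Qed.

Lemma mkV_row_m1 (x : arr m) bm cm bm1 cm1 : mkV x bm cm bm1 cm1 (rm1, bm1) = cm1.
Proof. by rewrite mkVE xpair_eqE eq_sym (negPf (row_m_neq_m1 m_gt0)) eqxx. Qed.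

Lemma mkV_eq_sym (x v : arr m) bm bm1 :
  (v == mkV x bm (v (rm, bm)) bm1 (v (rm1, bm1))) =
  (x == mkV v bm (x (rm, bm)) bm1 (x (rm1, bm1))).
Proof.
by apply/eqP/eqP => h; apply/ffunP => p; rewrite mkVE;
  case: eqP => [->//|/eqP/negPf h1]; case: eqP => [->//|/eqP/negPf h2];
  rewrite h mkVE h1 h2.
Qed.

(* For fixed [B_m, B_{m+1}], [mkV] rewrites two cells: [v] arises from [x]
   through some coins iff [x] arises from [v] through some coins. *)
Lemma sum_mkV_eq (x v : arr m) bm bm1 :
  \sum_(cm : bool) \sum_(cm1 : bool) (v == mkV x bm cm bm1 cm1)%:R
  = \sum_(a : bool) \sum_(a' : bool) (x == mkV v bm a bm1 a')%:R :> R.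
Proof.
have single (y z : arr m) : \sum_(c : bool) \sum_(c' : bool)
    (y == mkV z bm c bm1 c')%:R = (y == mkV z bm (y (rm, bm)) bm1 (y (rm1, bm1)))%:R :> R.
  rewrite (sumr_bool_single (c0 := y (rm, bm))) => [|c yc].
    rewrite (sumr_bool_single (c0 := y (rm1, bm1))) // => c' yc'.
    by case: eqP => // yE; move: yc'; rewrite yE mkV_row_m1 eqxx.
  by apply: big1 => c' _; case: eqP => // yE; move: yc; rewrite yE mkV_row_m eqxx.
by rewrite !single mkV_eq_sym.
Qed.

Lemma pV_preimage (v : arr m) : pV R v =
  \sum_(bm < n) \sum_(bm1 < n) \sum_(a : bool) \sum_(a' : bool)
    pX R (mkV v bm a bm1 a') * pBm R (mkV v bm a bm1 a') bm
      * pBm1 R (mkV v bm a bm1 a') bm1 * (2^-1 * 2^-1).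
Proof.
transitivity (\sum_(x : arr m) \sum_(bm < n) \sum_(bm1 < n)
   \sum_(a : bool) \sum_(a' : bool)
   (pX R x * pBm R x bm * pBm1 R x bm1 * (2^-1 * 2^-1))
     * (x == mkV v bm a bm1 a')%:R).
  apply: eq_bigr => x _; apply: eq_bigr => bm _; apply: eq_bigr => bm1 _.
  under eq_bigr do rewrite -big_distrr /=.
  rewrite -big_distrr /= sum_mkV_eq big_distrr /=; apply: eq_bigr => a _.
  by rewrite big_distrr.
do 4![rewrite exchange_big; apply: eq_bigr => ? _].
by rewrite sumr_mul_eq.
Qed.

(* Only the coins [C_m = 0] and [C_{m+1} = 1] can produce [v] with positive
   probability, since [B_m] points at a zero and [B_{m+1}] at a one of [X]. *)
Lemma pV_coins (v : arr m) : pV R v =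
  \sum_(bm < n) \sum_(bm1 < n)
    pX R (mkV v bm false bm1 true)
     * (#|[set k | ~~ mkV v bm false bm1 true (rm, k)]|%:R)^-1
     * (#|[set k | mkV v bm false bm1 true (rm1, k)]|%:R)^-1 * (2^-1 * 2^-1).
Proof.
rewrite pV_preimage; apply: eq_bigr => bm _; apply: eq_bigr => bm1 _.
rewrite (sumr_bool_single (c0 := false)) => [|[] // _]; last first.
  by apply: big1 => a' _; rewrite /pBm mkV_row_m /= !(mul0r, mulr0).
rewrite (sumr_bool_single (c0 := true)) => [|[] // _]; last first.
  by rewrite /pBm1 mkV_row_m1 /= !(mul0r, mulr0).
by rewrite /pBm /pBm1 mkV_row_m mkV_row_m1 /= !mul1r.
Qed.

Lemma rowsum_mkV_offrow (v : arr m) bm a bm1 a' r : r != rm -> r != rm1 ->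
  rowsum (mkV v bm a bm1 a') r = rowsum v r.
Proof.
move=> /negPf r_m /negPf r_m1; rewrite /rowsum; apply: eq_bigr => k _.
by rewrite mkVE !xpair_eqE r_m r_m1.
Qed.

Lemma rowsum_mkV_row_m (v : arr m) bm bm1 a' :
  rowsum (mkV v bm false bm1 a') rm = (rowsum v rm - v (rm, bm))%N.
Proof.
rewrite /rowsum (bigD1 bm) //= [in RHS](bigD1 bm) //= mkV_row_m.
have /negPf ne := row_m_neq_m1 m_gt0.
under eq_bigr => k /negPf hk do rewrite mkVE !xpair_eqE eqxx hk ne /=.
by case: (v _) => /=; lia.
Qed.

Lemma rowsum_mkV_row_m1 (v : arr m) bm bm1 :
  rowsum (mkV v bm false bm1 true) rm1 = (rowsum v rm1 + ~~ v (rm1, bm1))%N.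
Proof.
rewrite /rowsum (bigD1 bm1) //= [in RHS](bigD1 bm1) //= mkV_row_m1.
have /negPf ne : rm1 != rm by rewrite eq_sym row_m_neq_m1.
under eq_bigr => k /negPf hk do rewrite mkVE !xpair_eqE eqxx hk ne /=.
by case: (v _) => /=; lia.
Qed.

(* [B_m] can be any of the [rowsum v rm] ones of row [m] of [v]; each of them
   was a zero of [X], which has [m + 1] zeros in that row. *)
Lemma sum_choices_Bm (v : arr m) :
  \sum_(bm < n) ((rowsum v rm - v (rm, bm) == m)%N%:R
                  / (n - (rowsum v rm - v (rm, bm)))%N%:R)
  = ((rowsum v rm == m) || (rowsum v rm == m.+1))%:R :> R.
Proof.
rewrite (sumr_split_bool (fun k => v (rm, k))
   (fun c => ((rowsum v rm - c == m)%N%:R / (n - (rowsum v rm - c))%N%:R))).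
rewrite card_row_true card_row_false /=.
move: (rowsum v rm) (rowsum_le v rm) => s; rewrite /nbulbs => s_le.
have m1_neq0 : (m%:R + 1 : R) != 0 by rewrite -(natrD R m 1) addn1 pnatr_eq0.
case: (eqVneq s m) => [->|s_m]; [|case: (eqVneq s m.+1) => [->|s_m1]].
- have -> : (m - 1 == m)%N = false by apply/eqP; lia.
  rewrite subn0 eqxx (_ : (m.*2.+1 - m = m + 1)%N); last by lia.
  by rewrite /= ?mulr0n ?mulr1n natrD mul0r mulr0 add0r mul1r mulfV.
- have -> : (m.+1 - 1 == m)%N = true by apply/eqP; lia.
  rewrite (_ : (m.*2.+1 - (m.+1 - 1) = m + 1)%N); last by lia.
  rewrite subn0 eqn_leq ltnn /= ?mulr0n ?mulr1n mul0r mulr0 addr0 mul1r.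
  by rewrite -addn1 natrD mulfV.
- have -> : (s - 1 == m)%N = false by apply/eqP; lia.
  by rewrite subn0 (negPf s_m) /= ?mulr0n !(mul0r, mulr0, addr0).
Qed.

Lemma sum_choices_Bm1 (v : arr m) :
  \sum_(bm1 < n) ((rowsum v rm1 + ~~ v (rm1, bm1) == m.+1)%N%:R
                  / (rowsum v rm1 + ~~ v (rm1, bm1))%N%:R)
  = ((rowsum v rm1 == m) || (rowsum v rm1 == m.+1))%:R :> R.
Proof.
rewrite (sumr_split_bool (fun k => v (rm1, k))
   (fun c => ((rowsum v rm1 + ~~ c == m.+1)%N%:R / (rowsum v rm1 + ~~ c)%N%:R))).
rewrite card_row_true card_row_false /=.
move: (rowsum v rm1) (rowsum_le v rm1) => s; rewrite /nbulbs => s_le.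
have m_neq0 : (m%:R : R) != 0 by rewrite pnatr_eq0 -lt0n.
have m1_neq0 : (m%:R + 1 : R) != 0 by rewrite -(natrD R m 1) addn1 pnatr_eq0.
have m2_neq0 : (m%:R + 1 + 1 : R) != 0.
  by rewrite -(natrD R m 1) -(natrD R _ 1) !addn1 pnatr_eq0.
case: (eqVneq s m) => [->|s_m]; [|case: (eqVneq s m.+1) => [->|s_m1]].
- rewrite addn0 addn1 eqxx (eqn_leq m) ltnn andbF.
  rewrite (_ : (m.*2.+1 - m = m + 1)%N); last by lia.
  rewrite /= ?mulr0n ?mulr1n -?[m.+1]addn1 !natrD ?mulr1n.
  by field; rewrite ?m_neq0 ?m1_neq0 ?m2_neq0.
- rewrite addn0 eqxx (_ : (m.+1 + 1 == m.+1) = false); last by apply/eqP; lia.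
  rewrite (_ : (m.*2.+1 - m.+1 = m)%N); last by lia.
  rewrite /= ?mulr0n ?mulr1n -?[m.+1]addn1 !natrD ?mulr1n.
  by field; rewrite ?m_neq0 ?m1_neq0 ?m2_neq0.
- rewrite addn0 addn1 eqSS (negPf s_m) (negPf s_m1) /= ?mulr0n.
  by rewrite !(mul0r, mulr0, addr0).
Qed.

Lemma prod_middle_stages (F : 'I_n -> R) :
  \prod_(r < n) F r = F rm * F rm1 * \prod_(r < n | ~~ middle_stage r) F r.
Proof.
rewrite (bigD1 rm) //= (bigD1 rm1) /=; last by rewrite eq_sym row_m_neq_m1.
rewrite mulrA; congr (_ * _); apply: eq_bigl => r.
by rewrite middle_stageE // negb_or andbC.
Qed.

Lemma natr_feasible (v : arr m) :
  (feasible v)%:R = \prod_(r < n) (stage_ok r (rowsum v r))%:R :> R.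
Proof.
case fv: (feasible v); move: fv; rewrite feasibleE.
  by move=> /forallP fv; rewrite big1 // => r _; rewrite fv.
move=> /negbT; rewrite negb_forall => /existsP [r /negPf hr].
by rewrite (bigD1 r) //= hr mul0r.
Qed.

Definition feasible_mass : R :=
  2^-1 * 2^-1 * \prod_(r < n) ('C(n, r.+1)%:R)^-1.

Lemma pV_uniform (v : arr m) : pV R v = (feasible v)%:R * feasible_mass.
Proof.
pose other := \prod_(r < n | ~~ middle_stage r) ((rowsum v r == r.+1)%:R : R).
pose f bm := ((rowsum v rm - v (rm, bm) == m)%N%:R
                  / (n - (rowsum v rm - v (rm, bm)))%N%:R : R).
pose g bm1 := ((rowsum v rm1 + ~~ v (rm1, bm1) == m.+1)%N%:R
                  / (rowsum v rm1 + ~~ v (rm1, bm1))%N%:R : R).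
have Srm : (rm.+1 = m)%N by rewrite val_row_m // prednK.
have Srm1 : (rm1.+1 = m.+1)%N by rewrite val_row_m1.
rewrite pV_coins.
transitivity (\sum_(bm < n) \sum_(bm1 < n) (feasible_mass * other) * (f bm * g bm1)).
  apply: eq_bigr => bm _; apply: eq_bigr => bm1 _.
  rewrite /pX big_split /= prod_middle_stages card_row_false card_row_true.
  rewrite rowsum_mkV_row_m rowsum_mkV_row_m1 Srm Srm1.
  have -> : \prod_(r < n | ~~ middle_stage r)
      ((rowsum (mkV v bm false bm1 true) r == r.+1)%:R : R) = other.
    apply: eq_bigr => r; rewrite middle_stageE // negb_or => /andP [r_m r_m1].
    by rewrite rowsum_mkV_offrow.
  by rewrite /feasible_mass /f /g; ring.
under eq_bigr do rewrite -big_distrr /=.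
rewrite -big_distrr /= -big_distrlr /= sum_choices_Bm sum_choices_Bm1.
have mid_rm : middle_stage rm := middle_rowM m_gt0 false.
have mid_rm1 : middle_stage rm1 := middle_rowM m_gt0 true.
rewrite natr_feasible prod_middle_stages /stage_ok mid_rm mid_rm1.
have -> : \prod_(r < n | ~~ middle_stage r)
   ((if middle_stage r then (rowsum v r == m) || (rowsum v r == m.+1)
     else rowsum v r == r.+1)%:R : R) = other.
  by apply: eq_bigr => r /negPf ->.
by ring.
Qed.

End UniformLaw.

Section FeasibleCount.
Variables (R : realFieldType) (m : nat).
Hypothesis m_gt0 : (0 < m)%N.
Local Notation n := (nbulbs m).

Lemma sum_prod_rows (F : 'I_n -> {ffun 'I_n -> bool} -> R) :
  \sum_(v : arr m) \prod_(r < n) F r [ffun j => v (r, j)]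
  = \prod_(r < n) \sum_(y : {ffun 'I_n -> bool}) F r y.
Proof.
pose rows (v : arr m) : {ffun 'I_n -> {ffun 'I_n -> bool}} :=
  [ffun r => [ffun j => v (r, j)]].
have rows_bij : bijective rows.
  exists (fun y : {ffun 'I_n -> {ffun 'I_n -> bool}} =>
            [ffun p => y p.1 p.2] : arr m) => [v|y]; apply/ffunP.
    by move=> [r j]; rewrite !ffunE.
  by move=> r; apply/ffunP => j; rewrite !ffunE.
rewrite bigA_distr_bigA /= (reindex rows (onW_bij _ rows_bij)) /=.
by apply: eq_bigr => v _; apply: eq_bigr => r _; rewrite ffunE.
Qed.

Lemma card_rows_sum k :
  \sum_(y : {ffun 'I_n -> bool}) ((\sum_(j < n) y j)%N == k)%:R = 'C(n, k)%:R :> R.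
Proof.
pose indicator (A : {set 'I_n}) := [ffun j => j \in A].
have indicator_bij : bijective indicator.
  exists (fun y : {ffun 'I_n -> bool} => [set j | y j]) => [A|y].
    by apply/setP => j; rewrite inE ffunE.
  by apply/ffunP => j; rewrite ffunE inE.
rewrite (reindex indicator (onW_bij _ indicator_bij)) /=.
rewrite (eq_bigr (fun A : {set 'I_n} => (#|A| == k)%:R)) => [|A _]; last first.
  by rewrite sum_nat_card; congr ((_ == _)%:R); apply: eq_card => j; rewrite inE ffunE.
by rewrite sumr_natr_card card_draws card_ord.
Qed.

(* Row [r] of a feasible array is any of the ['C(n, r+1)] subsets of size
   [r + 1], or, for the two middle stages, any of the
   ['C(n, m) + 'C(n, m+1) = 2 'C(n, m)] subsets of size [m] or [m + 1]. *)
Lemma sum_feasible_mass : \sum_(v : arr m) (feasible v)%:R * feasible_mass R m = 1.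
Proof.
have mid_rm : middle_stage (row_m m) := middle_rowM m_gt0 false.
have mid_rm1 : middle_stage (row_m1 m) := middle_rowM m_gt0 true.
have Srm : ((row_m m).+1 = m)%N by rewrite val_row_m // prednK.
have Srm1 : ((row_m1 m).+1 = m.+1)%N by rewrite val_row_m1.
have Cn_neq0 : 'C(n, m)%:R != 0 :> R by rewrite pnatr_eq0 -lt0n bin_gt0 /nbulbs; lia.
have Cn_sym : 'C(n, m.+1) = 'C(n, m).
  by rewrite -bin_sub /nbulbs; [congr 'C(_, _); lia | lia].
have middle_count (r : 'I_n) : middle_stage r ->
    \sum_(y : {ffun 'I_n -> bool}) (stage_ok r (\sum_(j < n) y j))%:R
    = 2 * 'C(n, m)%:R :> R.
  move=> mr; rewrite /stage_ok mr.
  transitivity (\sum_(y : {ffun 'I_n -> bool}) ((\sum_(j < n) y j == m)%N%:R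
      + (\sum_(j < n) y j == m.+1)%N%:R : R)).
    apply: eq_bigr => y _; case: (eqVneq (\sum_(j < n) y j)%N m) => [->|_] /=.
      by rewrite (_ : (m == m.+1) = false) ?mulr0n ?addr0 //; apply/eqP; lia.
    by rewrite mulr0n add0r.
  by rewrite big_split /= !card_rows_sum Cn_sym; ring.
rewrite -big_distrl /=.
transitivity ((\prod_(r < n)
    \sum_(y : {ffun 'I_n -> bool}) (stage_ok r (\sum_(j < n) y j))%:R)
    * feasible_mass R m).
  rewrite -sum_prod_rows; congr (_ * _); apply: eq_bigr => v _.
  rewrite natr_feasible; apply: eq_bigr => r _.
  by congr ((stage_ok _ _)%:R); apply: eq_bigr => j _; rewrite ffunE.
rewrite /feasible_mass mulrC -!mulrA -big_split /= prod_middle_stages //.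
rewrite [\prod_(r < n | _) _]big1 ?mulr1 => [|r /negPf rm]; last first.
  rewrite /stage_ok rm card_rows_sum mulVf // pnatr_eq0 -lt0n bin_gt0.
  exact: ltn_ord.
by rewrite !middle_count // Srm Srm1 Cn_sym; field.
Qed.

End FeasibleCount.

Section Coupling.
Variables (R : realFieldType) (m : nat).
Hypothesis m_gt0 : (0 < m)%N.
Local Notation n := (nbulbs m).

Lemma sum_pF i (v : arr m) b : \sum_(f : bool) pF R i v b f = 1.
Proof. by rewrite big_bool /= /pF addrC subrK. Qed.

Lemma sum_pJ i (v : arr m) b : feasible v -> \sum_(j < n) pJ R i v b j = 1.
Proof.
move=> fv; rewrite /pJ -big_distrl /= sumr_natr_card mulfV // card_row_neq pnatr_eq0.
have := feasible_middle_rowsum (middle_rowM m_gt0 b) fv.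
by case: (v _) => /orP [] /eqP ->; rewrite /nbulbs; lia.
Qed.

Lemma Vtot_Vi i (v : arr m) b f j : pjoint R i v b f j != 0 ->
  [/\ Vtot (Vi i v b f j)
        = (Vtot v + (~~ colpar v i && f)
           + 2 * (~~ colpar v i && ~~ colpar v j && ~~ f))%N,
      (Vtot v <= Vtot (Vi i v b f j))%N
    & (Vtot (Vi i v b f j) <= Vtot v + 2)%N].
Proof.
rewrite /pjoint !mulf_eq0 !negb_or => /andP [_ pJ_neq0].
have vji : v (rowM m b, i) != v (rowM m b, j).
  by apply/eqP => vE; move: pJ_neq0; rewrite /pJ vE eqxx /= eqxx.
suff -> : Vtot (Vi i v b f j)
        = (Vtot v + (~~ colpar v i && f)
           + 2 * (~~ colpar v i && ~~ colpar v j && ~~ f))%N.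
  by split => //; case: (colpar v i); case: f; case: (colpar v j) => /=; lia.
rewrite /Vi; case ci: (colpar v i) => /=; first by lia.
case: f => /=; first by rewrite Vtot_flip ?ci //; lia.
by rewrite Vtot_swap ?ci //; case: (colpar v j) => /=; lia.
Qed.

Section Incoming.
Variables (i : 'I_n) (b : bool).
Local Notation M := (rowM m b).

Lemma incoming_flip (w : arr m) :
  \sum_(v : arr m) (feasible v && ~~ colpar v i)%:R *
     (pF R i v b true * (flip v M i == w)%:R)
  = (feasible w && colpar w i)%:R * (feasible (flip w M i))%:R / m.+1%:R.
Proof.
under eq_bigr do rewrite flip_eq mulrA.
by rewrite sumr_mul_eq /pF flipK colpar_flip eqxx negbK !natr_andb; ring.
Qed.

Lemma incoming_swap (w : arr m) :
  \sum_(v : arr m) (feasible v && ~~ colpar v i)%:R *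
     (pF R i v b false * \sum_(j < n) pJ R i v b j * (swap v M i j == w)%:R)
  = (feasible w && colpar w i)%:R
    * ((if w (M, i) then n - rowsum w M else rowsum w M)%N%:R
        / (if w (M, i) then rowsum w M else n - rowsum w M)%N%:R)
    * (1 - (if w (M, i) then rowsum w M == m else rowsum w M == m.+1)%:R
           / m.+1%:R).
Proof.
have mM := middle_rowM m_gt0 b.
under eq_bigr do rewrite big_distrr /= big_distrr /=.
rewrite exchange_big /=.
under eq_bigr => j _ do under eq_bigr do rewrite swap_eq !mulrA.
under eq_bigr => j _ do rewrite sumr_mul_eq feasible_swap.
case fw: (feasible w); last by rewrite big1 ?mul0r // => j _; rewrite !mul0r.
set s := rowsum w M.
pose X := (colpar w i)%:R
  * (1 - (if w (M, i) then s == m else s == m.+1)%:R / m.+1%:R)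
  / (if w (M, i) then s else n - s)%N%:R : R.
transitivity (\sum_(j < n) (w (M, j) != w (M, i))%:R * X).
  apply: eq_bigr => j _.
  case: (eqVneq i j) => [<-|ij].
    by rewrite /pJ !swap_row tpermL eqxx /= !(mul0r, mulr0).
  rewrite /pF (feasible_flip (e := swap w M i j) _ mM fw); last exact: rowsum_swap.
  rewrite /pJ card_row_neq rowsum_swap !swap_row tpermL tpermR colpar_swap // eqxx /X.
  by case: (colpar w i); case: (w (M, i)); case: (w (M, j)) => /=;
    rewrite ?(mul0r, mulr0, mul1r, mulr1).
by rewrite -big_distrl /= sumr_natr_card card_row_neq /X -/s; ring.
Qed.

(* The rates [1/(m+1)] for toggling and [1/#{j : V_{Mj} <> V_{Mi}}] for the
   partner of a swap are exactly those making every feasible [w] with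
   [w_i = 1] receive total mass one from the arrays with [v_i = 0]. *)
Lemma incoming_unlit (w : arr m) :
  \sum_(v : arr m) (feasible v && ~~ colpar v i)%:R *
   (pF R i v b true * (flip v M i == w)%:R
    + pF R i v b false * \sum_(j < n) pJ R i v b j * (swap v M i j == w)%:R)
  = (feasible w && colpar w i)%:R.
Proof.
under eq_bigr do rewrite mulrDr.
rewrite big_split /= incoming_flip incoming_swap.
case fw: (feasible w); last by rewrite /= !mul0r add0r.
have mM := middle_rowM m_gt0 b.
rewrite (feasible_flip _ mM fw) //.
have m_neq0 : (m%:R : R) != 0 by rewrite pnatr_eq0 -lt0n.
have m1_neq0 : (m%:R + 1 : R) != 0 by rewrite -(natrD R m 1) addn1 pnatr_eq0.
have n_m : (n - m = m.+1)%N by rewrite /nbulbs; lia.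
have n_m1 : (n - m.+1 = m)%N by rewrite /nbulbs; lia.
have m_m1 : (m == m.+1) = false by rewrite eqn_leq ltnn andbF.
have m1_m : (m.+1 == m) = false by rewrite eqn_leq ltnn.
case: (w (M, i)); case/orP: (feasible_middle_rowsum mM fw) => /eqP ->;
  rewrite !eqxx ?m_m1 ?m1_m ?n_m ?n_m1 /= -?[m.+1]addn1 ?natrD;
  by field; rewrite ?m_neq0 ?m1_neq0.
Qed.

End Incoming.

Definition pVi_given (i : 'I_n) (v w : arr m) : R :=
  \sum_(b : bool) \sum_(f : bool) \sum_(j < n)
     2^-1 * pF R i v b f * pJ R i v b j * (Vi i v b f j == w)%:R.

Lemma pVi_givenE i (v w : arr m) : feasible v ->
  pVi_given i v w = if colpar v i then (v == w)%:R else
    \sum_(b : bool) 2^-1 *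
      (pF R i v b true * (flip v (rowM m b) i == w)%:R
       + pF R i v b false *
           \sum_(j < n) pJ R i v b j * (swap v (rowM m b) i j == w)%:R).
Proof.
move=> fv; rewrite /pVi_given /Vi; case: (colpar v i).
  transitivity (\sum_(b : bool) (v == w)%:R * 2^-1 *
     ((\sum_(f : bool) pF R i v b f) * (\sum_(j < n) pJ R i v b j))).
    apply: eq_bigr => b _; rewrite big_distrlr big_distrr /=; apply: eq_bigr => f _.
    by rewrite big_distrr /=; apply: eq_bigr => j _; ring.
  under eq_bigr do rewrite sum_pF sum_pJ // !mulr1.
  by rewrite -big_distrr /= big_bool /=; field.
apply: eq_bigr => b _; rewrite big_bool /= -big_split /=.
have -> : pF R i v b true * (flip v (rowM m b) i == w)%:R
    = \sum_(j < n) pF R i v b true * (flip v (rowM m b) i == w)%:R * pJ R i v b j.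
  by rewrite -big_distrr /= sum_pJ // mulr1.
by rewrite !big_distrr -big_split big_distrr /=; apply: eq_bigr => j _; ring.
Qed.

Lemma sum_pVi_given i (v : arr m) : feasible v ->
  \sum_(w : arr m) pVi_given i v w = 1.
Proof.
move=> fv; transitivity (\sum_(b : bool) 2^-1 *
    ((\sum_(f : bool) pF R i v b f) * (\sum_(j < n) pJ R i v b j))).
  rewrite exchange_big; apply: eq_bigr => b _; rewrite exchange_big big_distrlr.
  rewrite big_distrr; apply: eq_bigr => f _; rewrite exchange_big big_distrr.
  apply: eq_bigr => j _; rewrite -big_distrr sumr_eq_natr /=; ring.
under eq_bigr do rewrite sum_pF sum_pJ // !mulr1.
by rewrite big_bool /=; field.
Qed.

Lemma sum_feasible_pVi_given i (w : arr m) :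
  \sum_(v : arr m) (feasible v)%:R * pVi_given i v w
  = 2 * (feasible w && colpar w i)%:R.
Proof.
transitivity (\sum_(v : arr m) ((feasible v && colpar v i)%:R * (v == w)%:R
  + \sum_(b : bool) 2^-1 * ((feasible v && ~~ colpar v i)%:R *
      (pF R i v b true * (flip v (rowM m b) i == w)%:R
       + pF R i v b false *
           \sum_(j < n) pJ R i v b j * (swap v (rowM m b) i j == w)%:R)))).
  apply: eq_bigr => v _; case fv: (feasible v); last first.
    by rewrite /= !mul0r add0r big1 // => b _; rewrite mul0r mulr0.
  rewrite pVi_givenE //=; case: (colpar v i) => /=.
    by rewrite mul1r big1 ?addr0 // => b _; rewrite mul0r mulr0.
  by rewrite mul0r add0r mul1r; apply: eq_bigr => b _; rewrite mul1r.
rewrite big_split /= sumr_mul_eq exchange_big /=.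
under eq_bigr do rewrite -big_distrr /= incoming_unlit.
by rewrite big_bool /=; field.
Qed.

Lemma pV_lit i : \sum_(v : arr m) pV R v * (colpar v i)%:R = 2^-1.
Proof.
have count_lit : \sum_(v : arr m) (feasible v)%:R
    = 2 * \sum_(w : arr m) (feasible w && colpar w i)%:R :> R.
  rewrite big_distrr /=.
  under [RHS]eq_bigr => w _ do rewrite -sum_feasible_pVi_given.
  rewrite exchange_big /=; apply: eq_bigr => v _.
  rewrite -big_distrr /=; case fv: (feasible v); last by rewrite !mul0r.
  by rewrite sum_pVi_given // mulr1.
have := sum_feasible_mass R m_gt0; rewrite -big_distrl /= count_lit => total.
set lit := \sum_(w : arr m) (feasible w && colpar w i)%:R in count_lit total *.
transitivity (lit * feasible_mass R m).
  rewrite big_distrl /=; apply: eq_bigr => v _.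
  by rewrite pV_uniform // natr_andb; ring.
have := congr1 (fun x => 2^-1 * x) total; rewrite /= mulr1 => <-.
by field.
Qed.

Lemma law_Vi i (w : arr m) :
  \sum_(v : arr m) \sum_(b : bool) \sum_(f : bool) \sum_(j < n)
      pjoint R i v b f j * (Vi i v b f j == w)%:R
  = pV R w * (colpar w i)%:R / \sum_(v : arr m) pV R v * (colpar v i)%:R.
Proof.
rewrite pV_lit.
transitivity (feasible_mass R m * \sum_(v : arr m) (feasible v)%:R * pVi_given i v w).
  rewrite big_distrr /=; apply: eq_bigr => v _; rewrite mulrA big_distrr /=.
  apply: eq_bigr => b _; rewrite big_distrr /=; apply: eq_bigr => f _.
  rewrite big_distrr /=; apply: eq_bigr => j _.
  by rewrite /pjoint pV_uniform //; ring.
by rewrite sum_feasible_pVi_given pV_uniform // natr_andb; field.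
Qed.

Lemma size_bias_lit (g : nat -> R) i :
  \sum_(w : arr m) pV R w * (colpar w i)%:R * g (Vtot w)
  = 2^-1 * \sum_(v : arr m) \sum_(b : bool) \sum_(f : bool) \sum_(j < n)
               pjoint R i v b f j * g (Vtot (Vi i v b f j)).
Proof.
transitivity (\sum_(w : arr m) 2^-1 *
  (\sum_(v : arr m) \sum_(b : bool) \sum_(f : bool) \sum_(j < n)
      pjoint R i v b f j * (Vi i v b f j == w)%:R) * g (Vtot w)).
  by apply: eq_bigr => w _; rewrite law_Vi pV_lit; field.
under eq_bigr do rewrite -mulrA.
rewrite -big_distrr /=; congr (_ * _).
do 4![under eq_bigr => w _ do rewrite big_distrl /=;
      rewrite exchange_big /=; apply: eq_bigr => ? _].
under eq_bigr => w _ do rewrite mulrAC eq_sym.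
exact: (sumr_mul_eq (fun w => pjoint R i _ _ _ _ * g (Vtot w))).
Qed.

Lemma size_bias (g : nat -> R) :
  \sum_(v : arr m) pV R v * (Vtot v)%:R * g (Vtot v)
  = (\sum_(v : arr m) pV R v * (Vtot v)%:R)
    * (\sum_(i < n) n%:R^-1 *
         \sum_(v : arr m) \sum_(b : bool) \sum_(f : bool) \sum_(j < n)
            pjoint R i v b f j * g (Vtot (Vi i v b f j))).
Proof.
have mean_V : \sum_(v : arr m) pV R v * (Vtot v)%:R = n%:R * 2^-1.
  under eq_bigr => v _ do rewrite /Vtot natr_sum big_distrr /=.
  rewrite exchange_big /=.
  under eq_bigr => i _ do rewrite pV_lit.
  by rewrite sumr_const card_ord mulr_natl.
rewrite mean_V.
under eq_bigr => v _ do rewrite /Vtot natr_sum big_distrr big_distrl /=.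
rewrite exchange_big /=.
under eq_bigr => i _ do rewrite size_bias_lit.
rewrite big_distrr /=; apply: eq_bigr => i _.
have n_neq0 : (n%:R : R) != 0 by rewrite pnatr_eq0.
by field.
Qed.

End Coupling.

Unset Implicit Arguments.

Theorem theorem3p2 (R : realFieldType) (m : nat) (hm : (0 < m)%N) :
  (forall (i : 'I_(nbulbs m)) (w : arr m),
     \sum_(v : arr m) \sum_(b : bool) \sum_(f : bool) \sum_(j < nbulbs m)
        pjoint R i v b f j * (Vi i v b f j == w)%:R
     = pV R w * (colpar w i)%:R
       / \sum_(v : arr m) pV R v * (colpar v i)%:R)
  /\
  (forall g : nat -> R,
     \sum_(v : arr m) pV R v * (Vtot v)%:R * g (Vtot v)
     = (\sum_(v : arr m) pV R v * (Vtot v)%:R)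
       * (\sum_(i < nbulbs m) (nbulbs m)%:R^-1 *
            \sum_(v : arr m) \sum_(b : bool) \sum_(f : bool) \sum_(j < nbulbs m)
               pjoint R i v b f j * g (Vtot (Vi i v b f j))))
  /\
  (forall (i : 'I_(nbulbs m)) (v : arr m) (b f : bool) (j : 'I_(nbulbs m)),
     pjoint R i v b f j != 0 ->
     [/\ Vtot (Vi i v b f j)
           = (Vtot v + (~~ colpar v i && f)
              + 2 * (~~ colpar v i && ~~ colpar v j && ~~ f))%N,
         (Vtot v <= Vtot (Vi i v b f j))%N
       & (Vtot (Vi i v b f j) <= Vtot v + 2)%N]).
Proof.
split; first exact: law_Vi.
split; first exact: size_bias.
exact: Vtot_Vi.
Qed.
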